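(* Let $n,m$ be positive integers. If both $n$ and $m$ are even, then $\chi'_{m\Sigma}(K_{n,m})=4$ if $n=m=2$, $\chi'_{m\Sigma}(K_{n,m})=3$ if $n=m\ge 4$, and $\chi'_{m\Sigma}(K_{n,m})=2$ if $n\ne m$. If at least one of $n,m$ is odd and $n,m\ge 2$, then $\chi'_{m\Sigma}(K_{n,m})=5$ if $n=m=3$, $\chi'_{m\Sigma}(K_{n,m})=4$ if $n=m=5$, and $\chi'_{m\Sigma}(K_{n,m})=3$ otherwise.
   Context: A $k$-edge-coloring of $G$ is any map $c:E(G)\to\{1,\dots,k\}$ (adjacent edges may share colors). It induces $\sigma_c(v)=\sum_{u\in N(v)}c(vu)$. The coloring is neighbor sum distinguishing (NSD) if $\sigma_c(u)\ne\sigma_c(v)$ for every edge $uv$. It is majority if every vertex $v$ is incident to at most $d(v)/2$ edges of each single color. $\chi'_{m\Sigma}(G)$ denotes the least $k$ such that $G$ has a $k$-edge-coloring that is both majority and NSD. *)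

From mathcomp Require Import all_boot.
Set Implicit Arguments. Unset Strict Implicit. Unset Printing Implicit Defensive.

(* A simple graph: a finite vertex type T with a symmetric irreflexive
   adjacency relation adj. An edge coloring is c : T -> T -> nat, where
   c u v is the color of the edge uv (required symmetric on edges). *)

Definition is_edge_coloring (T : finType) (adj : rel T) (k : nat)
  (c : T -> T -> nat) : Prop :=
  forall u v, adj u v -> c u v = c v u /\ 1 <= c u v <= k.

Definition sigma (T : finType) (adj : rel T) (c : T -> T -> nat) (v : T) : nat :=
  \sum_(u | adj v u) c v u.

Definition is_NSD (T : finType) (adj : rel T) (c : T -> T -> nat) : Prop :=
  forall u v, adj u v -> sigma adj c u <> sigma adj c v.

Definition is_majority (T : finType) (adj : rel T) (c : T -> T -> nat) : Prop :=
  forall (v : T) (a : nat),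
    2 * #|[set u | adj v u && (c v u == a)]| <= #|[set u | adj v u]|.

Definition has_mNSD_coloring (T : finType) (adj : rel T) (k : nat) : Prop :=
  exists c : T -> T -> nat,
    [/\ is_edge_coloring adj k c, is_majority adj c & is_NSD adj c].

Definition chi_mSigma_eq (T : finType) (adj : rel T) (k : nat) : Prop :=
  has_mNSD_coloring adj k /\ forall k', k' < k -> ~ has_mNSD_coloring adj k'.

Arguments chi_mSigma_eq : clear implicits.
Definition Knm_adj (n m : nat) : rel ('I_n + 'I_m)%type :=
  fun x y => match x, y with
             | inl _, inr _ => true
             | inr _, inl _ => true
             | _, _ => false
             end.
Arguments Knm_adj : clear implicits.

From mathcomp Require Import all_boot zify.
Set Implicit Arguments. Unset Strict Implicit. Unset Printing Implicit Defensive.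

(* A coloring of K_{n,m} is encoded as the n x m matrix of its edge colors: vertex
   sums become row and column sums, and the majority condition says that no color
   fills more than half of a row or of a column.

   One color never satisfies majority.  With two colors every line
   of length l consists of l/2 ones and l/2 twos, so l is even and the line sums to
   3l/2: odd sides need three colors, and so does K_{n,n}.  When N + 1 = k t and
   N <= 2t + 1, that is (N, k, t) = (2, 3, 1), (3, 4, 1) or (5, 3, 2), majority
   forces every line of K_{N,N} to contain each of the k colors t times, except for
   one deficient color that appears t - 1 times.  Lines with the same deficient
   color are permutations of each other, hence have the same sum, so no column
   shares the deficient color d of the first row; counting the entries equal to d
   by rows gives less than N t, and by columns exactly N t.

   Matrices are glued from small tiles whose row and column sums
   obey additive constraints, typically that the mean color is exactly 2: then rows
   sum to 2m and columns to 2n, which differ when n <> m.  Sides 2 and 5, which are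
   not sums of 3s and 4s, use two-row strips whose column sums are only within 1 of
   the mean, and the square case puts on top a band of four rows whose column sums
   miss the mean.  The remaining small cases are explicit matrices checked by
   computation. *)

(** * Majority sequences and matrices *)

Definition majority (s : seq nat) := forall a, 2 * count_mem a s <= size s.

Definition majorityb (s : seq nat) := all (fun a => 2 * count_mem a s <= size s) s.

Lemma majorityP s : reflect (majority s) (majorityb s).
Proof.
apply: (iffP allP) => [maj a|maj a _]; last exact: maj.
by have [/maj //|/count_memPn ->] := boolP (a \in s).
Qed.

Lemma majority_cat s1 s2 : majority s1 -> majority s2 -> majority (s1 ++ s2).
Proof. by move=> maj1 maj2 a; rewrite count_cat size_cat mulnDr leq_add. Qed.

Definition colored k (s : seq nat) := all (fun x => 0 < x <= k) s.

Lemma sum_count_colors k s : colored k s -> \sum_(1 <= a < k.+1) count_mem a s = size s.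
Proof.
elim: s => [|x s IH] /=; first by rewrite big1.
case/andP => xk /IH {}IH; rewrite big_split /= IH -[(size s).+1]add1n; congr (_ + _).
rewrite (bigD1_seq x) ?mem_index_iota ?iota_uniq //= eqxx big1 // => a.
by rewrite eq_sym => /negbTE ->.
Qed.

Lemma deficient_color k t s : colored k s -> majority s ->
  (size s).+1 = k * t -> size s <= (2 * t).+1 ->
  exists2 d, 0 < d <= k & forall a, 0 < a <= k -> count_mem a s = t - (a == d).
Proof.
move=> col maj Ekt le2t.
have le_t a : count_mem a s <= t by have := maj a; lia.
have : \sum_(1 <= a < k.+1) (t - count_mem a s) = 1.
  by rewrite sumnB ?sum_count_colors ?sum_nat_const_nat //; lia.
case/sum_nat_seq_eq1 => d [dk _ def_d not_d]; rewrite mem_index_iota in dk.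
exists d => // a ak; have := le_t a; case: eqP => [-> |/eqP ad]; first by lia.
by have := not_d a ad; rewrite mem_index_iota => /(_ ak isT); lia.
Qed.

Lemma perm_colors k s1 s2 : colored k s1 -> colored k s2 ->
  (forall a, 0 < a <= k -> count_mem a s1 = count_mem a s2) -> perm_eq s1 s2.
Proof.
move=> /allP col1 /allP col2 E; apply/allP => x.
by rewrite mem_cat => /orP[/col1|/col2] /E /eqP.
Qed.

Lemma two_colors_sumn s : colored 2 s -> majority s -> 2 * sumn s = 3 * size s.
Proof.
have counts : colored 2 s ->
    sumn s = count_mem 1 s + 2 * count_mem 2 s /\ size s = count_mem 1 s + count_mem 2 s.
  elim: s => //= x s IH /andP[x12 /IH]; case: x x12 => [|[|[|]]] //= _; lia.
by move=> /counts[Esum Esize] maj; have := maj 1; have := maj 2; lia.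
Qed.

Definition mrow (M : nat -> nat -> nat) m i := [seq M i j | j <- iota 0 m].
Definition mcol (M : nat -> nat -> nat) n j := [seq M i j | i <- iota 0 n].
Definition transpose (M : nat -> nat -> nat) : nat -> nat -> nat := fun i j => M j i.

Lemma size_mrow M m i : size (mrow M m i) = m.
Proof. by rewrite size_map size_iota. Qed.

Lemma size_mcol M n j : size (mcol M n j) = n.
Proof. by rewrite size_map size_iota. Qed.

Definition majority_mx k n m M :=
  [/\ forall i j, i < n -> j < m -> 0 < M i j <= k,
      forall i, i < n -> majority (mrow M m i) &
      forall j, j < m -> majority (mcol M n j)].

Definition mNSD_mx k n m M :=
  majority_mx k n m M /\
  forall i j, i < n -> j < m -> sumn (mrow M m i) <> sumn (mcol M n j).

Section MajorityMatrix.
Variables (k n m : nat) (M : nat -> nat -> nat).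
Hypothesis majM : majority_mx k n m M.

Lemma colored_mrow i : i < n -> colored k (mrow M m i).
Proof.
case: majM => col _ _ lt_in; apply/allP => x /mapP[j].
by rewrite mem_iota => /andP[_ lt_jm] ->; apply: col.
Qed.

Lemma colored_mcol j : j < m -> colored k (mcol M n j).
Proof.
case: majM => col _ _ lt_jm; apply/allP => x /mapP[i].
by rewrite mem_iota => /andP[_ lt_in] ->; apply: col.
Qed.

End MajorityMatrix.

Lemma majority_mx_transpose k n m M : majority_mx k n m M -> majority_mx k m n (transpose M).
Proof. by case=> col maj_r maj_c; split=> // i j lt_im lt_jn; apply: col. Qed.

Lemma mNSD_mx_transpose k n m M : mNSD_mx k n m M -> mNSD_mx k m n (transpose M).
Proof.
case=> /majority_mx_transpose majT nsd; split=> // i j lt_im lt_jn.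
exact/nesym/nsd.
Qed.

Lemma mNSD_mx_widen k k' n m M : k <= k' -> mNSD_mx k n m M -> mNSD_mx k' n m M.
Proof.
move=> le_kk' [[col maj_r maj_c] nsd]; split=> //; split=> // i j lt_in lt_jm.
by have := col i j lt_in lt_jm; lia.
Qed.

(** * Lower bounds *)

Lemma no_majority_mx_1 n m M : 0 < n -> 0 < m -> ~ majority_mx 1 n m M.
Proof.
move=> n_gt0 m_gt0 majM; case: (majM) => _ /(_ 0 n_gt0 1) + _.
have := sum_count_colors (colored_mrow majM n_gt0); rewrite big_nat1 size_mrow => ->.
lia.
Qed.

Lemma two_colors_row_sum n m M i : majority_mx 2 n m M -> i < n -> 2 * sumn (mrow M m i) = 3 * m.
Proof.
move=> majM lt_in; case: (majM) => _ /(_ i lt_in) maj _.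
by rewrite two_colors_sumn ?size_mrow // (colored_mrow majM).
Qed.

Lemma no_majority_mx_2_odd n m M : 0 < n -> odd m -> ~ majority_mx 2 n m M.
Proof. by move=> n_gt0 odd_m /two_colors_row_sum /(_ n_gt0); lia. Qed.

Lemma no_mNSD_mx_2_square N M : 0 < N -> ~ mNSD_mx 2 N N M.
Proof.
move=> N_gt0 [majM nsd]; apply: (nsd 0 0 N_gt0 N_gt0).
have row_sum := two_colors_row_sum majM N_gt0.
have col_sum : 2 * sumn (mcol M N 0) = 3 * N.
  exact: two_colors_row_sum (majority_mx_transpose majM) N_gt0.
lia.
Qed.

Lemma count_mem_mrow M m i a : count_mem a (mrow M m i) = \sum_(0 <= j < m) (M i j == a).
Proof. by rewrite count_map -sum1_count big_mkcond /index_iota subn0. Qed.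

Lemma sum_count_mrow_mcol M n m a :
  \sum_(0 <= i < n) count_mem a (mrow M m i) = \sum_(0 <= j < m) count_mem a (mcol M n j).
Proof.
rewrite (eq_bigr _ (fun i _ => count_mem_mrow M m i a)) exchange_big.
by apply: eq_bigr => j _; rewrite (count_mem_mrow (transpose M)).
Qed.

Lemma no_mNSD_mx_square k t N M :
  0 < N -> N.+1 = k * t -> N <= (2 * t).+1 -> ~ mNSD_mx k N N M.
Proof.
move=> N_gt0 Ekt le_N2t [majM nsd]; case: (majM) => _ maj_r maj_c.
have deficient s : colored k s -> majority s -> size s = N ->
    exists2 d, 0 < d <= k & forall a, 0 < a <= k -> count_mem a s = t - (a == d).
  by move=> col maj Es; apply: deficient_color; rewrite ?Es.
have [d dk def_row0] := deficient (mrow M N 0) (colored_mrow majM N_gt0)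
  (maj_r 0 N_gt0) (size_mrow M N 0).
have col_full j : 0 <= j < N -> count_mem d (mcol M N j) = t.
  move=> /andP[_ lt_jN].
  have [d' _ def_col] := deficient _ (colored_mcol majM lt_jN) (maj_c j lt_jN) (size_mcol M N j).
  rewrite def_col //; case: eqP => [dd'|_]; last exact: subn0.
  case: (nsd 0 j N_gt0 lt_jN); apply/perm_sumn/(perm_colors (colored_mrow majM N_gt0)).
    exact (colored_mcol majM lt_jN).
  by move=> a ak; rewrite def_row0 // def_col // dd'.
have t_gt0 : 0 < t by case: (posnP t) Ekt => // ->; rewrite muln0.
have : \sum_(0 <= i < N) count_mem d (mrow M N i) < N * t.
  rewrite big_ltn // def_row0 // eqxx -[N in N * t](prednK N_gt0) mulSn.
  have : \sum_(1 <= i < N) count_mem d (mrow M N i) <= \sum_(1 <= i < N) t.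
    rewrite big_nat_cond [leqRHS]big_nat_cond; apply: leq_sum => i /andP[/andP[_ /maj_r]].
    by move=> /(_ d); rewrite size_mrow; lia.
  rewrite sum_nat_const_nat; lia.
by rewrite sum_count_mrow_mcol (eq_big_nat _ _ col_full) sum_nat_const_nat subn0 ltnn.
Qed.

(** * Tiles *)

Definition tile k n m M (Pr Pc : nat -> nat -> bool) :=
  [/\ majority_mx k n m M,
      forall i, i < n -> Pr (sumn (mrow M m i)) m &
      forall j, j < m -> Pc (sumn (mcol M n j)) n].

Definition sum_closed (P : nat -> nat -> bool) :=
  P 0 0 /\ forall s1 l1 s2 l2, P s1 l1 -> P s2 l2 -> P (s1 + s2) (l1 + l2).

Lemma tile_transpose k n m M Pr Pc : tile k n m M Pr Pc -> tile k m n (transpose M) Pc Pr.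
Proof. by case=> /majority_mx_transpose. Qed.

Lemma mNSD_mx_tile k n m M (Pr Pc : nat -> nat -> bool) : tile k n m M Pr Pc ->
  (forall s1 s2, Pr s1 m -> Pc s2 n -> s1 <> s2) -> mNSD_mx k n m M.
Proof. by case=> majM rows cols sep; split=> // i j /rows + /cols; apply: sep. Qed.

Definition hcat A m1 B : nat -> nat -> nat :=
  fun i j => if j < m1 then A i j else B i (j - m1).

Definition vcat A n1 B := transpose (hcat (transpose A) n1 (transpose B)).

Lemma mrow_hcat A B m1 m2 i :
  mrow (hcat A m1 B) (m1 + m2) i = mrow A m1 i ++ mrow B m2 i.
Proof.
rewrite /mrow iotaD map_cat add0n -(addn0 m1) iotaDl addn0 -map_comp; congr (_ ++ _).
  by apply/eq_in_map => j; rewrite mem_iota /hcat => /andP[_ ->].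
by apply/eq_map => j; rewrite /hcat /= ltnNge leq_addr addKn.
Qed.

Lemma mcol_hcat A B m1 n j :
  mcol (hcat A m1 B) n j = if j < m1 then mcol A n j else mcol B n (j - m1).
Proof. by rewrite /mcol /hcat; case: ifP. Qed.

Lemma tile_hcat k n m1 m2 A B (Pr1 Pr2 Pr Pc : nat -> nat -> bool) :
  tile k n m1 A Pr1 Pc -> tile k n m2 B Pr2 Pc ->
  (forall s1 s2, Pr1 s1 m1 -> Pr2 s2 m2 -> Pr (s1 + s2) (m1 + m2)) ->
  tile k n (m1 + m2) (hcat A m1 B) Pr Pc.
Proof.
move=> [[colA majA_r majA_c] rowsA colsA] [[colB majB_r majB_c] rowsB colsB] add_Pr.
split; first split.
- move=> i j lt_in lt_jm; rewrite /hcat.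
  by case: (ltnP j m1) => [lt_jm1|le_m1j]; [apply: colA|apply: colB; lia].
- by move=> i lt_in; rewrite mrow_hcat; apply: majority_cat; [apply: majA_r|apply: majB_r].
- move=> j lt_jm; rewrite mcol_hcat.
  by case: (ltnP j m1) => [lt_jm1|le_m1j]; [apply: majA_c|apply: majB_c; lia].
- by move=> i lt_in; rewrite mrow_hcat sumn_cat; apply: add_Pr; [apply: rowsA|apply: rowsB].
- move=> j lt_jm; rewrite mcol_hcat.
  by case: (ltnP j m1) => [lt_jm1|le_m1j]; [apply: colsA|apply: colsB; lia].
Qed.

Lemma tile_vcat k n1 n2 m A B (Pr Pc1 Pc2 Pc : nat -> nat -> bool) :
  tile k n1 m A Pr Pc1 -> tile k n2 m B Pr Pc2 ->
  (forall s1 s2, Pc1 s1 n1 -> Pc2 s2 n2 -> Pc (s1 + s2) (n1 + n2)) ->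
  tile k (n1 + n2) m (vcat A n1 B) Pr Pc.
Proof.
move=> /tile_transpose tA /tile_transpose tB add_Pc.
by apply: (tile_transpose (tile_hcat tA tB add_Pc)).
Qed.

Fixpoint hrep A w c : nat -> nat -> nat :=
  if c is c'.+1 then hcat A w (hrep A w c') else fun _ _ => 0.

Lemma tile_hrep k n w A Pr Pc c :
  tile k n w A Pr Pc -> sum_closed Pr -> tile k n (c * w) (hrep A w c) Pr Pc.
Proof.
move=> tA [Pr0 add_Pr]; elim: c => [|c IH] /=.
  by split=> //; split=> // i _ a; rewrite /mrow.
by rewrite mulSn; apply: tile_hcat tA IH _ => s1 s2; apply: add_Pr.
Qed.

Definition sum_of a b n := exists x y, n = x * a + y * b.

Lemma tile_hband k h a b A B Pr Pc w :
  tile k h a A Pr Pc -> tile k h b B Pr Pc -> sum_closed Pr -> sum_of a b w ->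
  exists M, tile k h w M Pr Pc.
Proof.
move=> tA tB clPr [x [y ->]]; exists (hcat (hrep A a x) (x * a) (hrep B b y)).
by apply: tile_hcat (tile_hrep x tA clPr) (tile_hrep y tB clPr) _ => s1 s2; apply: clPr.2.
Qed.

Lemma tile_vband k w a b A B Pr Pc h :
  tile k a w A Pr Pc -> tile k b w B Pr Pc -> sum_closed Pc -> sum_of a b h ->
  exists M, tile k h w M Pr Pc.
Proof.
move=> /tile_transpose tA /tile_transpose tB clPc /(tile_hband tA tB clPc)[M tM].
by exists (transpose M); apply: tile_transpose.
Qed.

Definition has_mean p q : nat -> nat -> bool := fun s l => q * s == p * l.
Notation mean2 := (has_mean 2 1).
Definition near_mean2 : nat -> nat -> bool := fun s l => (2 * l <= s.+1) && (s <= (2 * l).+1).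
Definition off_mean2 : nat -> nat -> bool := fun s l => s != 2 * l.

Lemma has_mean_sum_closed p q : sum_closed (has_mean p q).
Proof. by split=> [|s1 l1 s2 l2 /eqP E1 /eqP E2]; rewrite /has_mean ?muln0 //; lia. Qed.

Lemma near_mean2_add s1 l1 s2 l2 :
  mean2 s1 l1 -> near_mean2 s2 l2 -> near_mean2 (s1 + s2) (l1 + l2).
Proof. by rewrite /has_mean /near_mean2 => /eqP E1 /andP[E2 E3]; apply/andP; lia. Qed.

Lemma off_mean2_add s1 l1 s2 l2 :
  off_mean2 s1 l1 -> mean2 s2 l2 -> off_mean2 (s1 + s2) (l1 + l2).
Proof. by rewrite /has_mean /off_mean2 => /eqP E1 /eqP E2; apply/eqP; lia. Qed.

Lemma all_iotaP n (P : pred nat) : reflect (forall i, i < n -> P i) (all P (iota 0 n)).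
Proof.
by apply: (iffP allP) => HP i; rewrite ?mem_iota => lt_in; apply: HP; rewrite ?mem_iota.
Qed.

Definition majority_mxb k n m M :=
  [&& all (fun i => all (fun j => 0 < M i j <= k) (iota 0 m)) (iota 0 n),
      all (fun i => majorityb (mrow M m i)) (iota 0 n) &
      all (fun j => majorityb (mcol M n j)) (iota 0 m)].

Lemma majority_mxP k n m M : reflect (majority_mx k n m M) (majority_mxb k n m M).
Proof.
apply: (iffP and3P) => [[/all_iotaP col /all_iotaP maj_r /all_iotaP maj_c]|[col maj_r maj_c]].
  split=> [i j /col /all_iotaP|i /maj_r /majorityP|j /maj_c /majorityP] //; apply.
split; apply/all_iotaP.
- by move=> i lt_in; apply/all_iotaP => j; apply: col.
- by move=> i /maj_r /majorityP.
- by move=> j /maj_c /majorityP.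
Qed.

Definition tileb k n m M (Pr Pc : nat -> nat -> bool) :=
  [&& majority_mxb k n m M,
      all (fun i => Pr (sumn (mrow M m i)) m) (iota 0 n) &
      all (fun j => Pc (sumn (mcol M n j)) n) (iota 0 m)].

Lemma tileP k n m M Pr Pc : reflect (tile k n m M Pr Pc) (tileb k n m M Pr Pc).
Proof.
apply: (iffP and3P) => [[/majority_mxP majM /all_iotaP rows /all_iotaP cols]|[majM rows cols]].
  by split.
by split; [apply/majority_mxP|apply/all_iotaP|apply/all_iotaP].
Qed.

Definition mNSD_mxb k n m M :=
  majority_mxb k n m M &&
  all (fun i => all (fun j => sumn (mrow M m i) != sumn (mcol M n j)) (iota 0 m)) (iota 0 n).

Lemma mNSD_mxP k n m M : reflect (mNSD_mx k n m M) (mNSD_mxb k n m M).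
Proof.
apply: (iffP andP) => [[/majority_mxP majM /all_iotaP nsd]|[majM nsd]]; split.
- exact: majM.
- by move=> i j /nsd /all_iotaP /[apply] /eqP.
- exact/majority_mxP.
- by apply/all_iotaP => i lt_in; apply/all_iotaP => j lt_jm; apply/eqP/nsd.
Qed.

Definition mx_of_rows (rows : seq (seq nat)) i j := nth 0 (nth [::] rows i) j.

Definition checker22 := mx_of_rows [:: [:: 1; 2]; [:: 2; 1]].
Definition grid33 := mx_of_rows [:: [:: 1; 2; 3]; [:: 2; 3; 1]; [:: 3; 1; 2]].
Definition grid34 := mx_of_rows [:: [:: 1; 3; 3; 1]; [:: 2; 1; 2; 3]; [:: 3; 2; 1; 2]].
Definition grid43 := mx_of_rows [:: [:: 1; 2; 3]; [:: 3; 1; 2]; [:: 3; 2; 1]; [:: 1; 3; 2]].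
Definition grid44 :=
  mx_of_rows [:: [:: 1; 3; 1; 3]; [:: 3; 1; 3; 1]; [:: 1; 3; 1; 3]; [:: 3; 1; 3; 1]].
Definition strip22 := mx_of_rows [:: [:: 1; 3]; [:: 3; 1]].
Definition strip23 := mx_of_rows [:: [:: 1; 2; 3]; [:: 3; 1; 2]].
Definition strip24 := mx_of_rows [:: [:: 1; 3; 1; 3]; [:: 3; 1; 3; 1]].
Definition skew43 := mx_of_rows [:: [:: 1; 2; 3]; [:: 1; 3; 2]; [:: 2; 1; 3]; [:: 2; 3; 1]].
Definition skew44 :=
  mx_of_rows [:: [:: 2; 2; 1; 3]; [:: 1; 3; 2; 2]; [:: 2; 2; 1; 3]; [:: 1; 3; 2; 2]].

Lemma tile_checker22 : tile 2 2 2 checker22 (has_mean 3 2) (has_mean 3 2).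
Proof. exact/tileP. Qed.
Lemma tile_grid33 : tile 3 3 3 grid33 mean2 mean2. Proof. exact/tileP. Qed.
Lemma tile_grid34 : tile 3 3 4 grid34 mean2 mean2. Proof. exact/tileP. Qed.
Lemma tile_grid43 : tile 3 4 3 grid43 mean2 mean2. Proof. exact/tileP. Qed.
Lemma tile_grid44 : tile 3 4 4 grid44 mean2 mean2. Proof. exact/tileP. Qed.
Lemma tile_strip22 : tile 3 2 2 strip22 mean2 near_mean2. Proof. exact/tileP. Qed.
Lemma tile_strip23 : tile 3 2 3 strip23 mean2 near_mean2. Proof. exact/tileP. Qed.
Lemma tile_strip24 : tile 3 2 4 strip24 mean2 near_mean2. Proof. exact/tileP. Qed.
Lemma tile_skew43 : tile 3 4 3 skew43 mean2 off_mean2. Proof. exact/tileP. Qed.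
Lemma tile_skew44 : tile 3 4 4 skew44 mean2 off_mean2. Proof. exact/tileP. Qed.

Definition witness22 := mx_of_rows [:: [:: 1; 2]; [:: 3; 4]].
Definition witness33 := mx_of_rows [:: [:: 2; 3; 5]; [:: 1; 4; 2]; [:: 5; 1; 4]].
Definition witness55 := mx_of_rows
  [:: [:: 1; 3; 2; 4; 1]; [:: 2; 2; 4; 3; 4]; [:: 3; 1; 1; 2; 2]; [:: 4; 3; 4; 1; 3];
      [:: 4; 4; 3; 2; 3]].
Definition witness66 := mx_of_rows
  [:: [:: 1; 1; 1; 3; 3; 2]; [:: 1; 1; 1; 3; 3; 2]; [:: 1; 1; 1; 3; 3; 2];
      [:: 3; 3; 3; 2; 2; 1]; [:: 3; 3; 3; 2; 2; 1]; [:: 3; 3; 3; 2; 2; 1]].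
Definition witness99 := mx_of_rows
  [:: [:: 2; 2; 2; 2; 1; 1; 1; 3; 3]; [:: 2; 2; 2; 2; 1; 1; 1; 3; 3];
      [:: 2; 2; 2; 2; 1; 1; 1; 3; 3]; [:: 2; 2; 2; 2; 1; 1; 1; 3; 3];
      [:: 1; 1; 1; 1; 3; 3; 3; 2; 2]; [:: 1; 1; 1; 1; 3; 3; 3; 2; 2];
      [:: 1; 1; 1; 1; 3; 3; 3; 2; 2]; [:: 1; 1; 1; 1; 3; 3; 3; 2; 2];
      [:: 3; 3; 3; 3; 2; 2; 2; 1; 1]].

Lemma mNSD_witness22 : mNSD_mx 4 2 2 witness22. Proof. exact/mNSD_mxP. Qed.
Lemma mNSD_witness33 : mNSD_mx 5 3 3 witness33. Proof. exact/mNSD_mxP. Qed.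
Lemma mNSD_witness55 : mNSD_mx 4 5 5 witness55. Proof. exact/mNSD_mxP. Qed.
Lemma mNSD_witness66 : mNSD_mx 3 6 6 witness66. Proof. exact/mNSD_mxP. Qed.
Lemma mNSD_witness99 : mNSD_mx 3 9 9 witness99. Proof. exact/mNSD_mxP. Qed.

(** * Constructions *)

Lemma sum_of_2_3 n : 1 < n -> sum_of 2 3 n.
Proof. by move=> n_gt1; exists (n./2 - odd n), (odd n); have := odd_double_half n; lia. Qed.

Lemma sum_of_3_4 n : n \notin [:: 1; 2; 5] -> sum_of 3 4 n.
Proof.
rewrite !inE => n_ok; exists (n %/ 3 - n %% 3), (n %% 3).
by have := divn_eq n 3; have := ltn_pmod n (isT : 0 < 3); lia.
Qed.

Lemma mean2_grid h w : sum_of 3 4 h -> sum_of 3 4 w -> exists M, tile 3 h w M mean2 mean2.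
Proof.
move=> hh hw; have cl2 := has_mean_sum_closed 2 1.
have [R3 tR3] := tile_hband tile_grid33 tile_grid34 cl2 hw.
have [R4 tR4] := tile_hband tile_grid43 tile_grid44 cl2 hw.
exact: tile_vband tR3 tR4 cl2 hh.
Qed.

Lemma mNSD_mx_2_even n m : ~~ odd n -> ~~ odd m -> n <> m -> exists M, mNSD_mx 2 n m M.
Proof.
move=> even_n even_m neq_nm; have cl := has_mean_sum_closed 3 2.
have pairs l : ~~ odd l -> sum_of 2 2 l.
  by move=> even_l; exists l./2, 0; have := odd_double_half l; lia.
have [R tR] := tile_hband tile_checker22 tile_checker22 cl (pairs m even_m).
have [M tM] := tile_vband tR tR cl (pairs n even_n).
by exists M; apply: mNSD_mx_tile tM _ => s1 s2 /eqP + /eqP; lia.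
Qed.

Lemma mNSD_mx_3_grid n m : sum_of 3 4 n -> sum_of 3 4 m -> n <> m -> exists M, mNSD_mx 3 n m M.
Proof.
move=> hn hm neq_nm; have [M tM] := mean2_grid hn hm.
by exists M; apply: mNSD_mx_tile tM _ => s1 s2 /eqP + /eqP; lia.
Qed.

Lemma mNSD_mx_3_two_rows m : 2 < m -> exists M, mNSD_mx 3 2 m M.
Proof.
move=> m_gt2; have cl2 := has_mean_sum_closed 2 1.
have [M tM] := tile_hband tile_strip22 tile_strip23 cl2 (sum_of_2_3 (ltnW m_gt2)).
by exists M; apply: mNSD_mx_tile tM _ => s1 s2 /eqP + /andP[]; lia.
Qed.

Lemma mNSD_mx_3_five_rows m : sum_of 3 4 m -> m <> 5 -> exists M, mNSD_mx 3 5 m M.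
Proof.
move=> hm m_neq5; have cl2 := has_mean_sum_closed 2 1.
have [T tT] := tile_hband tile_grid33 tile_grid34 cl2 hm.
have [B tB] := tile_hband tile_strip23 tile_strip24 cl2 hm.
have tTB := tile_vcat tT tB (fun s1 s2 => @near_mean2_add s1 _ s2 _).
by eexists; apply: mNSD_mx_tile tTB _ => s1 s2 /eqP + /andP[]; lia.
Qed.

Lemma mNSD_mx_3_transpose n m : (exists M, mNSD_mx 3 m n M) -> exists M, mNSD_mx 3 n m M.
Proof. by case=> M /mNSD_mx_transpose; exists (transpose M). Qed.

Lemma mNSD_mx_3_small n m : n \in [:: 2; 5] -> 1 < m -> n <> m -> exists M, mNSD_mx 3 n m M.
Proof.
rewrite !inE => /orP[]/eqP -> m_gt1 neq_nm; first by apply: mNSD_mx_3_two_rows; lia.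
have [->|m_neq2] := eqVneq m 2; first by apply/mNSD_mx_3_transpose/mNSD_mx_3_two_rows.
by apply: mNSD_mx_3_five_rows; [apply: sum_of_3_4; rewrite !inE; lia|lia].
Qed.

Lemma mNSD_mx_3_neq n m : 1 < n -> 1 < m -> n <> m -> exists M, mNSD_mx 3 n m M.
Proof.
move=> n_gt1 m_gt1 neq_nm.
have [n_small|n_big] := boolP (n \in [:: 2; 5]); first exact: mNSD_mx_3_small.
have [m_small|m_big] := boolP (m \in [:: 2; 5]).
  by apply/mNSD_mx_3_transpose/mNSD_mx_3_small => //; lia.
by apply: mNSD_mx_3_grid => //; apply: sum_of_3_4; move: n_big m_big; rewrite !inE; lia.
Qed.

Lemma mNSD_mx_3_square N : 3 < N -> N <> 5 -> exists M, mNSD_mx 3 N N M.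
Proof.
move=> N_gt3 N_neq5.
(* The construction below needs N - 4 to be a sum of 3s and 4s. *)
have [->|N_neq6] := eqVneq N 6; first by exists witness66; exact: mNSD_witness66.
have [->|N_neq9] := eqVneq N 9; first by exists witness99; exact: mNSD_witness99.
have [T tT] : exists T, tile 3 4 N T mean2 off_mean2.
  apply: tile_hband tile_skew43 tile_skew44 (has_mean_sum_closed 2 1) _.
  by apply: sum_of_3_4; rewrite !inE; lia.
have [B tB] : exists B, tile 3 (N - 4) N B mean2 mean2.
  by apply: mean2_grid; apply: sum_of_3_4; rewrite !inE; lia.
have := tile_vcat tT tB (fun s1 s2 => @off_mean2_add s1 _ s2 _).
rewrite subnKC // => tTB.
by eexists; apply: mNSD_mx_tile tTB _ => s1 s2 /eqP + /eqP; lia.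
Qed.

(** * Colorings of complete bipartite graphs *)

Lemma mrow_enum M m i : mrow M m i = [seq M i (val j) | j <- enum 'I_m].
Proof. by rewrite /mrow -val_enum_ord -map_comp. Qed.

Lemma mcol_enum M n j : mcol M n j = [seq M (val i) j | i <- enum 'I_n].
Proof. by rewrite /mcol -val_enum_ord -map_comp. Qed.

Lemma sum1_enum_ord k (P : pred 'I_k) : \sum_(j < k | P j) 1 = count P (enum 'I_k).
Proof. by rewrite -sum1_count big_enum_cond. Qed.

Section CompleteBipartite.
Variables n m : nat.
Local Notation V := ('I_n + 'I_m)%type.
Local Notation adj := (Knm_adj n m).
Implicit Types (c : V -> V -> nat) (M : nat -> nat -> nat).

Definition colors_inl c (i : 'I_n) := [seq c (inl i) (inr j) | j <- enum 'I_m].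
Definition colors_inr c (j : 'I_m) := [seq c (inr j) (inl i) | i <- enum 'I_n].

Lemma sigma_inl c i : sigma adj c (inl i) = sumn (colors_inl c i).
Proof. by rewrite /sigma big_sumType /= big_pred0 // add0n sumnE big_map big_enum. Qed.

Lemma sigma_inr c j : sigma adj c (inr j) = sumn (colors_inr c j).
Proof. by rewrite /sigma big_sumType /= [X in _ + X]big_pred0 // addn0 sumnE big_map big_enum. Qed.

Lemma majority_at_inl c i a :
  (2 * #|[set u | adj (inl i) u && (c (inl i) u == a)]| <= #|[set u | adj (inl i) u]|) =
  (2 * count_mem a (colors_inl c i) <= size (colors_inl c i)).
Proof.
rewrite count_map size_map -!sum1dep_card !big_sumType /= !big_pred0_eq !add0n.
by rewrite !sum1_enum_ord count_predT.
Qed.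

Lemma majority_at_inr c j a :
  (2 * #|[set u | adj (inr j) u && (c (inr j) u == a)]| <= #|[set u | adj (inr j) u]|) =
  (2 * count_mem a (colors_inr c j) <= size (colors_inr c j)).
Proof.
rewrite count_map size_map -!sum1dep_card !big_sumType /= !big_pred0_eq !addn0.
by rewrite !sum1_enum_ord count_predT.
Qed.

Lemma is_majority_Knm c : is_majority adj c <->
  (forall i, majority (colors_inl c i)) /\ (forall j, majority (colors_inr c j)).
Proof.
split=> [maj|[maj_l maj_r] [i|j] a].
- by split=> [i|j] a; [rewrite -majority_at_inl|rewrite -majority_at_inr]; apply: maj.
- by rewrite majority_at_inl; apply: maj_l.
- by rewrite majority_at_inr; apply: maj_r.
Qed.

Lemma is_NSD_Knm c : is_NSD adj c <-> forall i j, sumn (colors_inl c i) <> sumn (colors_inr c j).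
Proof.
split=> [nsd i j|nsd [i|j] [i'|j'] //= _]; rewrite ?sigma_inl ?sigma_inr.
- by have := nsd (inl i) (inr j) isT; rewrite sigma_inl sigma_inr.
- exact: nsd.
- exact/nesym/nsd.
Qed.

Definition mx_of_coloring c : nat -> nat -> nat := fun i j =>
  if insub i is Some i' then if insub j is Some j' then c (inl i') (inr j') else 0 else 0.

Definition coloring_of_mx M : V -> V -> nat := fun u v =>
  match u, v with inl i, inr j | inr j, inl i => M i j | _, _ => 0 end.

Lemma mx_of_coloring_ord c (i : 'I_n) (j : 'I_m) : mx_of_coloring c i j = c (inl i) (inr j).
Proof. by rewrite /mx_of_coloring !valK. Qed.

Lemma colors_inl_mx_of_coloring c i : colors_inl c i = mrow (mx_of_coloring c) m i.
Proof. by rewrite mrow_enum; apply: eq_map => j; rewrite mx_of_coloring_ord. Qed.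

Lemma colors_inr_mx_of_coloring c j : (forall i, c (inr j) (inl i) = c (inl i) (inr j)) ->
  colors_inr c j = mcol (mx_of_coloring c) n j.
Proof. by move=> sym; rewrite mcol_enum; apply: eq_map => i; rewrite mx_of_coloring_ord. Qed.

Lemma has_mNSD_coloring_Knm k : has_mNSD_coloring adj k <-> exists M, mNSD_mx k n m M.
Proof.
split=> [[c [col /is_majority_Knm[maj_l maj_r] /is_NSD_Knm nsd]]|[M [[colM maj_r maj_c] nsd]]].
  have sym j i : c (inr j) (inl i) = c (inl i) (inr j) by case: (col (inl i) (inr j) isT).
  exists (mx_of_coloring c); split; first split.
  - move=> i j lt_in lt_jm; have [_] := col (inl (Ordinal lt_in)) (inr (Ordinal lt_jm)) isT.
    by rewrite -mx_of_coloring_ord.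
  - by move=> i lt_in; have := maj_l (Ordinal lt_in); rewrite colors_inl_mx_of_coloring.
  - by move=> j lt_jm; have := maj_r (Ordinal lt_jm); rewrite colors_inr_mx_of_coloring.
  - move=> i j lt_in lt_jm; have := nsd (Ordinal lt_in) (Ordinal lt_jm).
    by rewrite colors_inl_mx_of_coloring colors_inr_mx_of_coloring.
exists (coloring_of_mx M); split.
- by case=> [i|j] [i'|j'] //= _; split=> //; apply: colM.
- by apply/is_majority_Knm; split=> [i|j]; rewrite /colors_inl /colors_inr -?mrow_enum -?mcol_enum;
    [apply: maj_r|apply: maj_c].
- by apply/is_NSD_Knm => i j; rewrite /colors_inl /colors_inr -mrow_enum -mcol_enum; apply: nsd.
Qed.

End CompleteBipartite.

Lemma chi_mSigma_Knm k n m : (exists M, mNSD_mx k.+1 n m M) ->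
  (forall M, ~ mNSD_mx k n m M) -> chi_mSigma_eq _ (Knm_adj n m) k.+1.
Proof.
move=> upper lower; split; first exact/has_mNSD_coloring_Knm.
move=> k' lt_k'k /has_mNSD_coloring_Knm[M HM]; apply: (lower M).
exact: mNSD_mx_widen HM.
Qed.

Theorem mainTheorem9 (n m : nat) (hn : 0 < n) (hm : 0 < m) :
  (~~ odd n && ~~ odd m ->
     (n = 2 /\ m = 2 -> chi_mSigma_eq _ (Knm_adj n m) 4) /\
     (n = m /\ 4 <= n -> chi_mSigma_eq _ (Knm_adj n m) 3) /\
     (n <> m -> chi_mSigma_eq _ (Knm_adj n m) 2)) /\
  (odd n || odd m -> 2 <= n -> 2 <= m ->
     (n = 3 /\ m = 3 -> chi_mSigma_eq _ (Knm_adj n m) 5) /\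
     (n = 5 /\ m = 5 -> chi_mSigma_eq _ (Knm_adj n m) 4) /\
     (~ (n = 3 /\ m = 3) /\ ~ (n = 5 /\ m = 5) -> chi_mSigma_eq _ (Knm_adj n m) 3)).
Proof.
split=> [/andP[even_n even_m]|odd_nm n_gt1 m_gt1]; (split; [|split]).
- case=> -> ->; apply: chi_mSigma_Knm => [|M]; first by exists witness22; exact: mNSD_witness22.
  exact: (@no_mNSD_mx_square 3 1).
- case=> <- n_ge4; apply: chi_mSigma_Knm => [|M]; last exact: no_mNSD_mx_2_square.
  by apply: mNSD_mx_3_square => // n5; rewrite n5 in even_n.
- move=> neq_nm; apply: chi_mSigma_Knm => [|M [majM _]]; first exact: mNSD_mx_2_even.
  exact: no_majority_mx_1 hn hm majM.
- case=> -> ->; apply: chi_mSigma_Knm => [|M]; first by exists witness33; exact: mNSD_witness33.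
  exact: (@no_mNSD_mx_square 4 1).
- case=> -> ->; apply: chi_mSigma_Knm => [|M]; first by exists witness55; exact: mNSD_witness55.
  exact: (@no_mNSD_mx_square 3 2).
- case=> not33 not55; apply: chi_mSigma_Knm => [|M [majM _]]; last first.
    case/orP: odd_nm => [odd_n|odd_m]; last exact: no_majority_mx_2_odd hn odd_m majM.
    exact: no_majority_mx_2_odd hm odd_n (majority_mx_transpose majM).
  have [eq_nm|/eqP neq_nm] := eqVneq n m; last exact: mNSD_mx_3_neq.
  subst m; apply: mNSD_mx_3_square => [|n5]; last by apply: not55.
  have n_neq3 : n <> 3 by move=> n3; apply: not33.
  by rewrite orbb in odd_nm; lia.
Qed.
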